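(* Let $R$ be Rado's poset. Then $AM_2(R(2))$ is well-quasi-ordered but not $\omega^2$-bqo.
   Context: Rado's poset $R$ has underlying set $V=\{(m,n)\in\mathbb{N}^2: m<n\}$ with $(m,n)\leq_R(m',n')$ iff either ($m=m'$ and $n\leq n'$) or $n<m'$. For a poset $P$, $P(2)$ is the set $P\times\{0,1\}$ with the order: $(x,i)\leq(y,j)$ iff either ($i=j$ and $x\leq y$), or ($i=0$, $j=1$, and there exist incomparable $x',y'\in P$ with $x\leq x'$ and $y'\leq y$). $AM_2(Q)$ is the set of two-element maximal antichains of $Q$ ordered by domination ($X\leq Y$ iff each $x\in X$ is below some $y\in Y$). Well-quasi-ordered: well-founded with no infinite antichain. Barriers and $\alpha$-bqo: finite subsets of $\mathbb{N}$ are identified with their increasing enumerations; $s\triangleleft t$ means there is a finite $r\subseteq\mathbb{N}$ with $s$ a proper initial segment of $r$ and $t$ equal to $r$ minus its least element. A barrier is an infinite set $B$ of finite subsets of $\mathbb{N}$, no member a proper subset of another, such that every infinite $X\subseteq\bigcup B$ has a nonempty initial segment in $B$; its order type is that of $B$ under the lexicographic order. A map $f$ from a barrier into a quasi-order $Q$ is good if $f(s)\leq f(t)$ for some $s\triangleleft t$; $Q$ is $\alpha$-bqo if every map from a barrier of order type at most $\alpha$ into $Q$ is good. *)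

From mathcomp Require Import all_boot.
Set Implicit Arguments. Unset Strict Implicit. Unset Printing Implicit Defensive.

Definition qlt {A : Type} (le : A -> A -> Prop) (x y : A) : Prop := le x y /\ ~ le y x.

Definition incomp {A : Type} (le : A -> A -> Prop) (x y : A) : Prop :=
  ~ le x y /\ ~ le y x.

Definition qwf {A : Type} (C : A -> Prop) (le : A -> A -> Prop) : Prop :=
  ~ exists q : nat -> A, (forall n, C (q n)) /\ (forall n, qlt le (q n.+1) (q n)).

Definition no_inf_antichain {A : Type} (C : A -> Prop) (le : A -> A -> Prop) : Prop :=
  ~ exists q : nat -> A, (forall n, C (q n)) /\
      (forall i j, i <> j -> incomp le (q i) (q j)).

Definition wqo {A : Type} (C : A -> Prop) (le : A -> A -> Prop) : Prop :=
  qwf C le /\ no_inf_antichain C le.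

Definition radoV (p : nat * nat) : Prop := (p.1 < p.2)%N.

Definition rado_le (p q : nat * nat) : Prop :=
  (p.1 = q.1 /\ (p.2 <= q.2)%N) \/ (p.2 < q.1)%N.

Definition dbl_carrier {A : Type} (C : A -> Prop) (x : A * bool) : Prop := C x.1.

Definition dbl_le {A : Type} (C : A -> Prop) (le : A -> A -> Prop)
    (x y : A * bool) : Prop :=
  (x.2 = y.2 /\ le x.1 y.1) \/
  (x.2 = false /\ y.2 = true /\
     exists x' y', C x' /\ C y' /\ incomp le x' y' /\ le x.1 x' /\ le y' y.1).

Definition AM2 {A : Type} (C : A -> Prop) (le : A -> A -> Prop) (X : A -> Prop) : Prop :=
  exists a b, C a /\ C b /\ a <> b /\ (forall z, X z <-> (z = a \/ z = b)) /\
    incomp le a b /\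
    (forall z, C z -> ~ X z -> ~ (incomp le z a /\ incomp le z b)).

Definition dominated {A : Type} (le : A -> A -> Prop) (X Y : A -> Prop) : Prop :=
  forall x, X x -> exists y, Y y /\ le x y.

(* a finite subset of nat, identified with its increasing enumeration *)
Definition fin_nat (s : seq nat) : Prop := sorted ltn s.

(* s is a nonempty initial segment of the (infinite) set X *)
Definition init_seg (X : nat -> bool) (s : seq nat) : Prop :=
  s <> [::] /\ fin_nat s /\ forall n, (n <= last 0 s)%N -> (n \in s <-> X n).

Definition barrier (B : seq nat -> Prop) : Prop :=
  (forall s, B s -> fin_nat s) /\
  (* B is infinite *)
  (forall l : seq (seq nat), exists s, B s /\ s \notin l) /\
  (forall s t, B s -> B t -> {subset s <= t} -> s = t) /\
  (forall X : nat -> bool,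
     (forall n, exists m, (n <= m)%N /\ X m) ->
     (forall m, X m -> exists s, B s /\ m \in s) ->
     exists s, B s /\ init_seg X s).

Definition lex_lt (s t : seq nat) : Prop :=
  ((size s < size t)%N /\ s = take (size s) t) \/
  (exists i, (i < size s)%N /\ (i < size t)%N /\ take i s = take i t /\
             (nth 0 s i < nth 0 t i)%N).

(* lexicographic order on omega^2 = nat * nat *)
Definition lex2_lt (a b : nat * nat) : Prop :=
  (a.1 < b.1)%N \/ (a.1 = b.1 /\ (a.2 < b.2)%N).

(* (B, lex) has order type at most omega^2: it order-embeds into omega^2 *)
Definition otp_le_omega2 (B : seq nat -> Prop) : Prop :=
  exists g : seq nat -> nat * nat,
    forall s t, B s -> B t -> lex_lt s t -> lex2_lt (g s) (g t).

(* s <| t : exists r with s a proper initial segment of r and t = r minus min r *)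
Definition shift_rel (s t : seq nat) : Prop :=
  exists r, fin_nat r /\ (exists k, (k < size r)%N /\ s = take k r) /\ t = behead r.

Definition good_map {A : Type} (le : A -> A -> Prop) (B : seq nat -> Prop)
    (f : seq nat -> A) : Prop :=
  exists s t, B s /\ B t /\ shift_rel s t /\ le (f s) (f t).

Definition omega2_bqo {A : Type} (C : A -> Prop) (le : A -> A -> Prop) : Prop :=
  forall B : seq nat -> Prop, barrier B -> otp_le_omega2 B ->
  forall f : seq nat -> A, (forall s, B s -> C (f s)) -> good_map le B f.

Definition R2_carrier := dbl_carrier radoV.
Definition R2_le := dbl_le radoV rado_le.
Definition AM2R2_carrier := AM2 R2_carrier R2_le.
Definition AM2R2_le := dominated R2_le.

From mathcomp Require Import all_boot zify.
From Stdlib Require Import Classical ClassicalEpsilon Wf_nat.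

Set Implicit Arguments. Unset Strict Implicit. Unset Printing Implicit Defensive.

(* In Rado's poset R, whenever y is not below x some element above x is
   incomparable to y; hence in R(2) one has (u,0) <= (v,1) exactly when v is not
   below u.  From this, a two-element maximal antichain of R(2) is either a twin
   {(x,0), (x,1)} or lies on level 0, where it is a maximal antichain
   {(0,1), (1,k)} of R; it cannot lie on level 1, because any two elements of R
   have a common upper bound w and then (w,0) is incomparable to both.
   Domination orders the level-0 antichains by k and the twins as R, so
   AM_2(R(2)) is the sum of omega and R, a wqo.  On the barrier of pairs {a < b},
   of order type omega^2, the twin map {a,b} |-> {((a,b),0), ((a,b),1)} is bad:
   {a,b} <| {b,c} while (a,b) is not below (b,c) in R. *)

Definition good {A : Type} (le : A -> A -> Prop) (q : nat -> A) : Prop :=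
  exists i j, i < j /\ le (q i) (q j).

Lemma wqo_of_good {A : Type} (C : A -> Prop) (le : A -> A -> Prop) :
  (forall x y z, C y -> le x y -> le y z -> le x z) ->
  (forall q, (forall n, C (q n)) -> good le q) -> wqo C le.
Proof.
move=> le_trans goodC; split.
- move=> [q [Cq desc]].
  have [i [j [ij le_ij]]] := goodC q Cq.
  suff down : forall d, le (q i) (q (i.+1 + d)) -> le (q i) (q i.+1).
    by apply: (proj2 (desc i)); apply: (down (j - i.+1)); rewrite subnKC.
  elim=> [|d IH]; first by rewrite addn0.
  rewrite addnS => le_d; apply: IH.
  exact: le_trans (Cq _) le_d (proj1 (desc _)).
- move=> [q [Cq anti]].
  have [i [j [ij le_ij]]] := goodC q Cq.
  by apply: (proj1 (anti i j _)) le_ij => E; rewrite E ltnn in ij.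
Qed.

Lemma good_shift {A : Type} (le : A -> A -> Prop) (q : nat -> A) N :
  good le (fun n => q (N + n)) -> good le q.
Proof. by move=> [i [j [ij le_ij]]]; exists (N + i), (N + j); rewrite ltn_add2l. Qed.

Lemma ex_argmin (P : nat -> Prop) (f : nat -> nat) :
  (exists n, P n) -> exists2 n, P n & forall m, P m -> f n <= f m.
Proof.
move=> [n Pn].
have [v [[[m Pm <-] min_v] _]] := dec_inh_nat_subset_has_unique_least_element
  (fun v => exists2 m, P m & f m = v) (fun v => classic _)
  (ex_intro _ _ (ex_intro2 _ _ n Pn erefl)).
by exists m => // m' Pm'; apply/leP/min_v; exists m'.
Qed.

Lemma often_or_eventually_not (P : nat -> Prop) :
  (forall N, exists2 n, N <= n & P n) \/ exists N, forall n, N <= n -> ~ P n.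
Proof.
have [|noN] := classic (exists N, forall n, N <= n -> ~ P n); first by right.
left => N; apply: NNPP => noP; apply: noN; exists N => n Nn Pn; apply: noP; by exists n.
Qed.

Lemma good_of_often {A : Type} (le : A -> A -> Prop) (q : nat -> A)
    (P : nat -> Prop) (rank : nat -> nat) :
  (forall N, exists2 n, N <= n & P n) ->
  (forall i j, P i -> P j -> rank i <= rank j -> le (q i) (q j)) -> good le q.
Proof.
move=> often mono.
have [i Pi min_i] := ex_argmin rank (let: ex_intro2 n _ Pn := often 0 in ex_intro _ n Pn).
have [j ij Pj] := often i.+1.
by exists i, j; split; last exact: mono (min_i j Pj).
Qed.

Lemma good_bounded_fst (b : nat) (q : nat -> nat * nat) : (forall n, (q n).1 < b) ->
  good (fun x y => x.1 = y.1 /\ x.2 <= y.2) q.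
Proof.
elim: b q => [|b IH] q bound; first by have := bound 0.
have [often|[N late]] := often_or_eventually_not (fun n => (q n).1 = b).
- apply: (good_of_often (rank := fun n => (q n).2) often) => i j qi qj.
  by rewrite qi qj.
- apply: (good_shift (N := N)); apply: IH => n.
  have := bound (N + n); have := late (N + n) (leq_addr _ _); lia.
Qed.

Definition sum_le {A B : Type} (leA : A -> A -> Prop) (leB : B -> B -> Prop)
    (c d : A + B) : Prop :=
  match c, d with
  | inl a, inl a' => leA a a'
  | inr b, inr b' => leB b b'
  | _, _ => False
  end.

Lemma good_nat_sum {B : Type} (C : B -> Prop) (le : B -> B -> Prop) (c : nat -> nat + B) :
  (forall q, (forall n, C (q n)) -> good le q) ->
  (forall n x, c n = inr x -> C x) -> good (sum_le (fun k k' => k <= k') le) c.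
Proof.
move=> goodC Cc.
have [often|[N late]] := often_or_eventually_not (fun n => exists k, c n = inl k).
- apply: (good_of_often (rank := fun n => if c n is inl k then k else 0) often).
  by move=> i j [k ci] [k' cj]; rewrite ci cj.
- have [q cq] : exists q : nat -> B, forall n, c (N + n) = inr (q n).
    apply: (choice (fun n x => c (N + n) = inr x)) => n.
    case cN: (c (N + n)) => [k|x]; last by exists x.
    by case: (late (N + n) (leq_addr _ _)); exists k.
  apply: (good_shift (N := N)).
  have [i [j [ij le_ij]]] := goodC q (fun n => Cc _ _ (cq n)).
  by exists i, j; rewrite !cq.
Qed.

Lemma incomp_sym {A : Type} (le : A -> A -> Prop) x y : incomp le x y -> incomp le y x.
Proof. by case. Qed.

Definition max_antichain2 {A : Type} (C : A -> Prop) (le : A -> A -> Prop) (a b : A) : Prop :=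
  [/\ C a, C b, incomp le a b &
      forall z, C z -> z <> a -> z <> b -> ~ (incomp le z a /\ incomp le z b)].

Lemma max_antichain2_sym {A : Type} (C : A -> Prop) (le : A -> A -> Prop) a b :
  max_antichain2 C le a b -> max_antichain2 C le b a.
Proof.
case=> Ca Cb ab maxab; split=> //; first exact: incomp_sym.
move=> z Cz zb za [zb' za'].
exact: maxab Cz za zb (conj za' zb').
Qed.

Lemma AM2P {A : Type} (C : A -> Prop) (le : A -> A -> Prop) X :
  AM2 C le X <-> exists a b,
    [/\ a <> b, forall z, X z <-> z = a \/ z = b & max_antichain2 C le a b].
Proof.
split.
- move=> [a [b [Ca [Cb [ab [Xab [inc maxX]]]]]]].
  exists a, b; split=> //; split=> // z Cz za zb.
  by apply: maxX => // /Xab [].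
- move=> [a [b [ab Xab [Ca Cb inc maxab]]]].
  exists a, b; do 5 (split=> //).
  by move=> z Cz nXz; apply: maxab => // E; apply: nXz; apply/Xab; [left | right].
Qed.

Lemma AM2_sub {A : Type} (C : A -> Prop) (le : A -> A -> Prop) X :
  AM2 C le X -> forall z, X z -> C z.
Proof. by move=> /AM2P [a [b [_ Xab [Ca Cb _ _]]]] z /Xab [->|->]. Qed.

Lemma dominated_ext {A : Type} (le : A -> A -> Prop) X X' Y Y' :
  (forall z, X z <-> X' z) -> (forall z, Y z <-> Y' z) ->
  dominated le X' Y' -> dominated le X Y.
Proof. by move=> XX' YY' domXY x /XX' /domXY [y [/YY' Yy le_xy]]; exists y. Qed.

Lemma dominated_trans {A : Type} (C : A -> Prop) (le : A -> A -> Prop) X Y Z :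
  (forall x y z, C y -> le x y -> le y z -> le x z) -> (forall y, Y y -> C y) ->
  dominated le X Y -> dominated le Y Z -> dominated le X Z.
Proof.
move=> le_trans CY domXY domYZ x /domXY [y [Yy le_xy]].
have [z [Zz le_yz]] := domYZ y Yy.
by exists z; split; last exact: le_trans (CY y Yy) le_xy le_yz.
Qed.

Section Doubling.

Variables (A : Type) (C : A -> Prop) (le : A -> A -> Prop).
Hypothesis le_trans : forall x y z, C y -> le x y -> le y z -> le x z.

Lemma dbl_le_same l x y : dbl_le C le (x, l) (y, l) <-> le x y.
Proof.
rewrite /dbl_le /=; split=> [[[_ //] | [-> [] //]] | le_xy]; by left.
Qed.

Lemma dbl_nle_10 x y : ~ dbl_le C le (x, true) (y, false).
Proof. by case=> [[] | []]. Qed.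

Lemma dbl_le_01_nge u v : C u -> C v -> dbl_le C le (u, false) (v, true) -> ~ le v u.
Proof.
move=> Cu Cv [[] // | [_ [_ [x' [y' [_ [Cy' [[_ nyx] [le_ux le_yv]]]]]]]]] le_vu.
by apply: nyx; apply: le_trans Cu (le_trans Cv le_yv le_vu) le_ux.
Qed.

Lemma dbl_le_trans x y z :
  C y.1 -> dbl_le C le x y -> dbl_le C le y z -> dbl_le C le x z.
Proof.
case: x y z => [x lx] [y ly] [z lz] /= Cy.
case=> [[/= <- le_xy] | [/= -> [-> [x' [y' [Cx' [Cy' [inc [le_xx' le_y'y]]]]]]]]];
  case=> [[/= <- le_yz] | [/= ly0 [-> [x'' [y'' [Cx'' [Cy'' [inc' [le_yx'' le_y''z]]]]]]]]].
- by left; split; last exact: le_trans Cy le_xy le_yz.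
- right; do 2!split=> //; exists x'', y''; do 4!split=> //.
  exact: le_trans Cy le_xy le_yx''.
- right; do 2!split=> //; exists x', y'; do 4!split=> //.
  exact: le_trans Cy le_y'y le_yz.
- by [].
Qed.

End Doubling.

Ltac rado_lia := unfold incomp, rado_le, radoV in *; simpl in *; lia.

Lemma rado_refl x : rado_le x x.
Proof. by left. Qed.

Lemma rado_trans x y z : radoV y -> rado_le x y -> rado_le y z -> rado_le x z.
Proof. case: x y z => [x1 x2] [y1 y2] [z1 z2]; rado_lia. Qed.

Lemma rado_antisym x y : radoV x -> radoV y -> rado_le x y -> rado_le y x -> x = y.
Proof.
by case: x y => [m n] [p q] Vx Vy le_xy le_yx; have [-> ->] : m = p /\ n = q by rado_lia.
Qed.

Lemma rado_good (q : nat -> nat * nat) : (forall n, radoV (q n)) -> good rado_le q.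
Proof.
move=> Vq.
have [[j lt_j] | none] := classic (exists j, (q 0).2 < (q j).1).
- exists 0, j; split; last by right.
  by case: j lt_j => // lt_0; have := Vq 0; rado_lia.
- have [|i [j [ij [E le2]]]] := @good_bounded_fst ((q 0).2).+1 q.
    by move=> n; rewrite ltnS leqNgt; apply/negP => lt_n; apply: none; exists n.
  by exists i, j; split; last by left.
Qed.

Lemma rado_incomp_above x y : radoV x -> radoV y -> ~ rado_le y x ->
  exists2 w, radoV w & rado_le x w /\ incomp rado_le w y.
Proof.
case: x y => [m n] [p q] Vx Vy nyx.
have [le_xy | nxy] := classic (rado_le (m, n) (p, q)); last first.
  by exists (m, n); [| split; [apply: rado_refl | split]].
have [[E lt_nq] | lt_np] : (m = p /\ n < q) \/ n < p by rado_lia.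
- by exists (n.+1, n + q + 2); rado_lia.
- by exists (m, n + p + 1); rado_lia.
Qed.

Lemma rado_max_antichain2 u v : max_antichain2 radoV rado_le u v -> u.1 < v.1 ->
  exists2 k, 1 < k & u = (0, 1) /\ v = (1, k).
Proof.
case: u v => [m n] [p q] [Vu Vv inc maxuv] /= lt_mp.
have not_max w : radoV w -> incomp rado_le w (m, n) -> incomp rado_le w (p, q) ->
    w = (m, n) \/ w = (p, q).
  move=> Vw wu wv; apply: NNPP => /not_or_and [wu' wv'].
  exact: maxuv Vw wu' wv' (conj wu wv).
have m0 : m = 0.
  case: (posnP m) => // m_gt0.
  by have [] := not_max (0, n + q + 1); try case; rado_lia.
have p1 : p = 1.
  case: (leqP p 1) => p_le1; first by rado_lia.
  by have [] := not_max (1, n + q + 3); try case; rado_lia.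
have n1 : n = 1.
  case: (leqP n 1) => n_le1; first by rado_lia.
  by have [] := not_max (2, n + q + 3); try case; rado_lia.
by exists q; [rado_lia | rewrite m0 p1 n1].
Qed.

Lemma R2_trans x y z : R2_carrier y -> R2_le x y -> R2_le y z -> R2_le x z.
Proof. exact: (dbl_le_trans rado_trans). Qed.

Lemma R2_le_cross u v : radoV u -> radoV v -> R2_le (u, false) (v, true) <-> ~ rado_le v u.
Proof.
move=> Vu Vv; split; first exact: (dbl_le_01_nge rado_trans Vu Vv).
move=> /(rado_incomp_above Vu Vv) [w Vw [le_uw inc_wv]].
by right; do 2!split=> //; exists w, v; do 4!split=> //; apply: rado_refl.
Qed.

Lemma R2_max_antichain2_same l u v :
  max_antichain2 R2_carrier R2_le (u, l) (v, l) -> max_antichain2 radoV rado_le u v.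
Proof.
case=> Vu Vv [nuv nvu] maxuv; split=> //.
  by split=> /(dbl_le_same radoV rado_le l); [apply: nuv | apply: nvu].
move=> w Vw wu wv [[nwu nuw] [nwv nvw]].
apply: (maxuv (w, l)) => //; try by case.
by split; split=> /(dbl_le_same radoV rado_le l).
Qed.

Lemma R2_no_max_antichain2_top u v : ~ max_antichain2 R2_carrier R2_le (u, true) (v, true).
Proof.
case=> Vu Vv _ maxuv.
pose w := (u.2 + v.2 + 1, u.2 + v.2 + 2).
have Vw : radoV w by rewrite /radoV /=; lia.
have below z : radoV z -> z.2 < w.1 -> incomp R2_le (w, false) (z, true).
  move=> Vz lt_zw; split; last exact: dbl_nle_10.
  by apply/(R2_le_cross Vw Vz) => /(_ (or_intror lt_zw)).
apply: (maxuv (w, false)) => //; try by case.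
by split; apply: below => //=; lia.
Qed.

Lemma R2_max_antichain2_mixed u v :
  max_antichain2 R2_carrier R2_le (u, false) (v, true) -> u = v.
Proof.
case=> Vu Vv [nuv _] maxuv.
have le_vu : rado_le v u by apply: NNPP => nvu; apply/nuv/R2_le_cross.
apply: NNPP => uv.
have nle_uv : ~ rado_le u v by move=> le_uv; apply/uv/rado_antisym.
have [w Vw [le_vw [nwu nuw]]] := rado_incomp_above Vv Vu nle_uv.
apply: (maxuv (w, false)) => //.
- by case=> wu; apply: nwu; rewrite wu; apply: rado_refl.
- split; first by split=> /(dbl_le_same radoV rado_le false).
  by split; [apply/(R2_le_cross Vw Vv) | apply: dbl_nle_10].
Qed.

Definition low_pair (k : nat) : nat * nat * bool -> Prop :=
  fun z => z = ((0, 1), false) \/ z = ((1, k), false).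

Definition twin_pair (x : nat * nat) : nat * nat * bool -> Prop :=
  fun z => z = (x, false) \/ z = (x, true).

Lemma AM2R2_classify X : AM2R2_carrier X ->
  (exists2 k, 1 < k & forall z, X z <-> low_pair k z) \/
  (exists2 x, radoV x & forall z, X z <-> twin_pair x z).
Proof.
move=> /AM2P [[u l] [[v l'] [_ Xuv maxuv]]].
have Xvu z : X z <-> z = (v, l') \/ z = (u, l) by rewrite Xuv; tauto.
have [Vu Vv _ _] := maxuv.
case: l l' Xuv Xvu maxuv Vu Vv => [] [] Xuv Xvu maxuv Vu Vv.
- by case: (R2_no_max_antichain2_top maxuv).
- right; exists u => //.
  by rewrite (R2_max_antichain2_mixed (max_antichain2_sym maxuv)) in Xvu.
- by right; exists u; rewrite // -(R2_max_antichain2_mixed maxuv) in Xuv.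
- left; have max_uv := R2_max_antichain2_same maxuv.
  have [lt_uv | lt_vu] : u.1 < v.1 \/ v.1 < u.1.
    by case: max_uv => _ _ inc _; move: inc; rado_lia.
  + have [k lt1k [Eu Ev]] := rado_max_antichain2 max_uv lt_uv.
    by exists k; rewrite // /low_pair -Eu -Ev.
  + have [k lt1k [Ev Eu]] := rado_max_antichain2 (max_antichain2_sym max_uv) lt_vu.
    by exists k; rewrite // /low_pair -Eu -Ev.
Qed.

Lemma low_pair_le k k' : k <= k' -> AM2R2_le (low_pair k) (low_pair k').
Proof.
move=> le_kk' z [-> | ->].
- by exists ((0, 1), false); split; [left | apply/(dbl_le_same radoV rado_le false)/rado_refl].
- by exists ((1, k'), false); split; [right | apply/(dbl_le_same radoV rado_le false); left].
Qed.

Lemma twin_pair_leE x y : AM2R2_le (twin_pair x) (twin_pair y) <-> rado_le x y.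
Proof.
split.
- move=> /(_ (x, true) (or_intror erefl)) [z [[-> | ->] le_xz]].
    by case: (dbl_nle_10 le_xz).
  exact/(dbl_le_same radoV rado_le true).
- move=> le_xy z [-> | ->].
  + by exists (y, false); split; [left | apply/(dbl_le_same radoV rado_le false)].
  + by exists (y, true); split; [right | apply/(dbl_le_same radoV rado_le true)].
Qed.

Lemma twin_pair_AM2 x : radoV x -> AM2R2_carrier (twin_pair x).
Proof.
move=> Vx; apply/AM2P; exists (x, false), (x, true); split=> //; split=> //.
- split; last exact: dbl_nle_10.
  by apply/(R2_le_cross Vx Vx)=> /(_ (rado_refl x)).
- move=> [w [|]] Vw _ _ [[nwx nxw] [nwx' nxw']].
  + apply: nxw; apply/(R2_le_cross Vx Vw) => le_wx.
    by apply: nwx'; apply/(dbl_le_same radoV rado_le true).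
  + apply: nwx'; apply/(R2_le_cross Vw Vx) => le_xw.
    by apply: nxw; apply/(dbl_le_same radoV rado_le false).
Qed.

Definition AM2R2_of (c : nat + nat * nat) : nat * nat * bool -> Prop :=
  match c with inl k => low_pair k | inr x => twin_pair x end.

Lemma AM2R2_good q : (forall n, AM2R2_carrier (q n)) -> good AM2R2_le q.
Proof.
move=> Aq.
have [c Ec] : exists c : nat -> nat + nat * nat, forall n,
    (forall x, c n = inr x -> radoV x) /\ forall z, q n z <-> AM2R2_of (c n) z.
  apply: (choice (fun n c => (forall x, c = inr x -> radoV x) /\
                             forall z, q n z <-> AM2R2_of c z)) => n.
  case: (AM2R2_classify (Aq n)) => [[k _ Ek] | [x Vx Ex]].
    by exists (inl k).
  by exists (inr x); split=> // _ [<-].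
have [i [j [ij le_ij]]] := good_nat_sum rado_good (fun n => (Ec n).1).
exists i, j; split=> //; apply: dominated_ext (Ec i).2 (Ec j).2 _.
move: le_ij (Ec i).1 (Ec j).1; case: (c i) => [k|x]; case: (c j) => [k'|y] //=.
- by move=> le_kk' _ _; apply: low_pair_le.
- by move=> le_xy _ _; apply/twin_pair_leE.
Qed.

Lemma AM2R2_wqo : wqo AM2R2_carrier AM2R2_le.
Proof.
apply: wqo_of_good AM2R2_good => X Y Z AY.
exact: dominated_trans R2_trans (AM2_sub AY).
Qed.

Definition pairs_nat (s : seq nat) : Prop := exists a b, a < b /\ s = [:: a; b].

Lemma pairs_nat_barrier : barrier pairs_nat.
Proof.
split; first by move=> _ [a [b [ab ->]]]; rewrite /fin_nat /= ab.
split.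
  move=> l; set m := \max_(s <- l) last 0 s.
  exists [:: 0; m.+1]; split; first by exists 0, m.+1.
  by apply/negP => /(@leq_bigmax_seq _ l xpredT (last 0)) /(_ isT); rewrite ltnn.
split.
  move=> _ _ [a [b [ab ->]]] [c [d [cd ->]]] sub_st.
  have := sub_st a (mem_head _ _); have := sub_st b (mem_last a [:: b]).
  rewrite !inE => /orP [] /eqP b_cd /orP [] /eqP a_cd;
    by have [-> ->] : a = c /\ b = d by lia.
move=> X infX _.
have [a Xa min_a] := ex_minnP (let: ex_intro m (conj _ Xm) := infX 0 in ex_intro _ m Xm).
have [b /andP [Xb ab] min_b] := @ex_minnP (fun m => X m && (a < m))
  (let: ex_intro m (conj am Xm) := infX a.+1 in ex_intro _ m (introT andP (conj Xm am))).
exists [:: a; b]; split; first by exists a, b.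
split=> //; split; first by rewrite /fin_nat /= ab.
move=> n /= le_nb; rewrite !inE; split; first by case/orP => /eqP ->.
move=> Xn; case: (ltngtP n a) => [lt_na | lt_an | //].
- by have := min_a n Xn; rewrite leqNgt lt_na.
- by have := min_b n; rewrite Xn lt_an => /(_ isT) le_bn; rewrite eqn_leq le_nb le_bn orbT.
Qed.

Lemma pairs_nat_otp : otp_le_omega2 pairs_nat.
Proof.
exists (fun s => (nth 0 s 0, nth 0 s 1)).
move=> _ _ [a [b [_ ->]]] [c [d [_ ->]]] [[] // | [[|[|i]] [//= _ [_ [/= E lt]]]]].
- by left.
- by case: E => ->; right.
Qed.

Lemma shift_rel_pairs a b c d : shift_rel [:: a; b] [:: c; d] -> b = c.
Proof.
move=> [[|r0 [|r1 r]] [_ [[k [_ Es]] /= Et]]]; try by case: k Es.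
by case: k Es => [|[|k]] //= [_ -> _]; case: Et.
Qed.

Definition twin_map (s : seq nat) : nat * nat * bool -> Prop :=
  twin_pair (nth 0 s 0, nth 0 s 1).

Theorem lemma6p4 :
  wqo AM2R2_carrier AM2R2_le /\ ~ omega2_bqo AM2R2_carrier AM2R2_le.
Proof.
split; first exact: AM2R2_wqo.
move/(_ pairs_nat pairs_nat_barrier pairs_nat_otp twin_map).
case=> [_ [a [b [ab ->]]] | s [t [[a [b [ab ->]]] [[c [d [_ ->]]] [shift_st]]]]].
  exact: twin_pair_AM2.
rewrite -(shift_rel_pairs shift_st).
by move/twin_pair_leE; rado_lia.
Qed.
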